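(* The extremal edges of the reduced Schubert system $\overline\Sigma$ satisfy: (1) every vertex $(v,t,s)$ of $\overline\Sigma$ is an end vertex of at most two extremal edges; (2) if $\beta\subset\mathcal B$ is such that the $\beta$-state $\Sigma_\beta$ is not contradictory, $\{(v,t,s),(i,j)\}$ is an extremal edge of $\overline\Sigma$, and $(v,t,s)$ is a vertex of $\Sigma_\beta$ (i.e. $\beta$-relevant), then $i\notin\beta$ and $j\in\beta$.
   Context: Let $Q$ be a quiver with finite $Q_0,Q_1$, $M$ a finite-dimensional complex representation with ordered basis $\mathcal B=\bigcup_p\mathcal B_p$ (bases of $M_p$, total order on $\mathcal B$); $M_v(i)=\sum_j\mu_{v,i,j}j$ for $v:p\to q$, $i\in\mathcal B_p$; coefficient quiver $\Gamma$ with vertices $\mathcal B$, arrows $(v,i,j)$ from $i$ to $j$ with $\mu_{v,i,j}\ne0$; natural $F:\Gamma\to Q$. An arrow $(v,s,t)$ of $\Gamma$ is extremal if for all arrows $(v,s',t')\ne(v,s,t)$ of $\Gamma$, $s<s'$ or $t'<t$. $\mathrm{Rel}^2=\{(i,j):F(i)=F(j),i\le j\}$; $\mathrm{Rel}^3$ = triples $(v,t,s)$ ($v:p\to q$, $s\in F^{-1}(p)$, $t\in F^{-1}(q)$) with some $(v,s',t')\in\Gamma_1$, $s\ge s'$, $t\le t'$. Complete Schubert system $\Sigma$: with $E(v,t,s)=\sum_{(v,s',t')\in\Gamma_1}\mu_{v,s',t'}w_{t,t'}w_{s',s}-\sum_{(v,s',t)\in\Gamma_1}\mu_{v,s',t}w_{s',s}$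 regarded as a polynomial in $w_{i,j}$, $(i,j)\in\mathrm{Rel}^2$ (others set to $0$), $\Sigma$ is the graph on $\mathrm{Rel}^2\sqcup\mathrm{Rel}^3$ with edge $\{(i,j),(v,t,s)\}$ iff $w_{i,j}$ occurs in $E(v,t,s)$ and links $\lambda=((v,t,s),S)$ whenever $\prod_Sw_{i,j}$ occurs with nonzero coefficient $\mu_\lambda$. Partial evaluations: partial $\mathrm{ev}:\mathrm{Rel}^2\dashrightarrow\mathbb C$ such that for each triple and each neighbour $(k,l)$, if all other neighbours are in the domain then so is $(k,l)$ and $\sum_\lambda\mu_\lambda\prod_S\mathrm{ev}=0$. $f_\beta(i,j)=1$ if $i=j\in\beta$, $0$ if $i\in\beta,i\ne j$, $0$ if $j\notin\beta$, undefined otherwise; $\Sigma_\beta$ is contradictory if no partial evaluation extends $f_\beta$, otherwise $\mathrm{ev}_\beta$ is the unique minimal one and $\Sigma_\beta$ is defined as follows: for $\lambda=((v,t,s),S)$ let $\mu_{\beta,\lambda}=\sum\mu_{\lambda'}\prod_{S'\cap\mathrm{dom}\,\mathrm{ev}_\beta}\mathrm{ev}_\beta$ over links $\lambda'=((v,t,s),S')$ of $\Sigma$ with $S'\setminus\mathrm{dom}\,\mathrm{ev}_\beta=S$; the vertices of $\Sigma_\beta$ are the pairs outside $\mathrm{dom}\,\mathrm{ev}_\beta$ and the triples $\tau$ for which some $\mu_{\beta,(\tau,S)}\ne0$. Reduced Schubert system $\overline\Sigma$: for $(v,t,s)\in\mathrm{Rel}^3$ let $\overline E(v,t,s)=\sum_{(v,s,t')\in\Gamma_1,t<t'}\mu_{v,s,t'}w_{t,t'}+\sum_{(v,s',t')\in\Gamma_1,t<t',s'<s}\mu_{v,s',t'}w_{t,t'}w_{s',s}-\sum_{(v,s',t)\in\Gamma_1,s'<s}\mu_{v,s',t}w_{s',s}-\mu_{v,s,t}$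 ($\mu_{v,s,t}=0$ if no such arrow). $\overline\Sigma$ has vertices $\{(i,j)\in\mathrm{Rel}^2:i<j\}\sqcup\{(v,t,s)\in\mathrm{Rel}^3:(v,s,t)\text{ not an extremal arrow}\}$, edges $\{(v,t,s),(i,j)\}$ iff $w_{i,j}$ occurs in $\overline E(v,t,s)$, and links $((v,t,s),S)$ for each monomial $\prod_Sw_{i,j}$ occurring in $\overline E(v,t,s)$ with nonzero coefficient. An edge $\{(v,t,s),(i,j)\}$ of $\overline\Sigma$ is simply linked if $((v,t,s),\{(i,j)\})$ is a link and the edge is a leg of no other link; it is extremal if it is simply linked and either $j=s$ and $(v,i,t)$ is an extremal arrow of $\Gamma$, or $i=t$ and $(v,s,j)$ is an extremal arrow of $\Gamma$. *)

From mathcomp Require Import all_boot all_order all_algebra.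
From mathcomp Require Import complex Rstruct.
From Stdlib Require Import Reals.
Set Implicit Arguments. Unset Strict Implicit. Unset Printing Implicit Defensive.
Import Order.TTheory GRing.Theory Num.Theory.
Local Open Scope ring_scope.

Notation CC := (Rdefinitions.R[i]).

Section Schubert.
(* Basis B of M: the totally ordered set 'I_n (natural order), with
   F : B -> Q0 sending a basis vector i to the vertex p with i \in B_p.
   Coefficients: mu v i j = mu_{v,i,j} (only meaningful when F i = src v,
   F j = tgt v; other values are irrelevant, see [arrow]). *)
Variables (Q0 Q1 : finType) (src tgt : Q1 -> Q0) (n : nat) (F : 'I_n -> Q0).
Variable (C : fieldType).
Variable (mu : Q1 -> 'I_n -> 'I_n -> C).

Local Notation P := ('I_n * 'I_n)%type.

Definition arrow (v : Q1) (i j : 'I_n) : bool :=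
  [&& F i == src v, F j == tgt v & mu v i j != 0].

Definition muG (v : Q1) (i j : 'I_n) : C := if arrow v i j then mu v i j else 0.

Definition extremal_arrow (v : Q1) (s t : 'I_n) : bool :=
  arrow v s t &&
  [forall s' : 'I_n, forall t' : 'I_n,
     (arrow v s' t' && ((s', t') != (s, t))) ==> ((val s < val s')%nat || (val t' < val t)%nat)].

Definition rel2 (i j : 'I_n) : bool := (F i == F j) && (val i <= val j)%nat.

Definition rel3 (v : Q1) (t s : 'I_n) : bool :=
  [&& F s == src v, F t == tgt v &
      [exists s' : 'I_n, exists t' : 'I_n,
         [&& arrow v s' t', (val s' <= val s)%nat & (val t <= val t')%nat]]].

(* a monomial is an exponent vector on the variables *)
Definition mon := {ffun P -> nat}.
Definition mon0 : mon := [ffun _ => 0%nat].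
Definition mvar (p : P) : mon := [ffun q => nat_of_bool (q == p)].
Definition mon2 (p q : P) : mon := [ffun r => (nat_of_bool (r == p) + nat_of_bool (r == q))%nat].

(* a polynomial is given as a formal sum (list) of terms coefficient*monomial;
   [coef E m] is the coefficient of the monomial m after collecting terms *)
Definition coef (E : seq (C * mon)) (m : mon) : C :=
  \sum_(x <- E | x.2 == m) x.1.

Definition links (E : seq (C * mon)) : seq mon :=
  [seq m <- undup (map snd E) | coef E m != 0].

Definition occurs (E : seq (C * mon)) (p : P) : bool :=
  has (fun m : mon => (0 < m p)%nat) (links E).

(* terms involving a variable w_{i,j} with (i,j) \notin Rel^2 are set to 0 *)
Definition admissible (x : C * mon) : bool :=
  [forall p : P, (0 < x.2 p)%nat ==> rel2 p.1 p.2].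

Definition Ecomp (v : Q1) (t s : 'I_n) : seq (C * mon) :=
  filter admissible
   ([seq (muG v s' t', mon2 (t, t') (s', s)) | s' <- enum 'I_n, t' <- enum 'I_n]
    ++ [seq (- muG v s' t, mvar (s', s)) | s' <- enum 'I_n]).

Definition monval (ev : P -> option C) (m : mon) : C :=
  \prod_(p : P) (odflt 0 (ev p)) ^+ (m p).

Definition evalE (ev : P -> option C) (E : seq (C * mon)) : C :=
  \sum_(m <- links E) coef E m * monval ev m.

Definition indom (ev : P -> option C) (p : P) : bool := ev p != None.

Definition is_peval (ev : P -> option C) : Prop :=
  (forall p : P, indom ev p -> rel2 p.1 p.2) /\
  (forall (v : Q1) (t s : 'I_n), rel3 v t s ->
     forall k : P, occurs (Ecomp v t s) k ->
       (forall p : P, occurs (Ecomp v t s) p -> p != k -> indom ev p) ->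
       indom ev k /\ evalE ev (Ecomp v t s) = 0).

Definition extends (ev f : P -> option C) : Prop :=
  forall (p : P) (x : C), f p = Some x -> ev p = Some x.

Definition fbeta (beta : {set 'I_n}) (p : P) : option C :=
  if rel2 p.1 p.2 then
    if (p.1 == p.2) && (p.1 \in beta) then Some 1
    else if (p.1 \in beta) || (p.2 \notin beta) then Some 0
    else None
  else None.

Definition restrict (ev : P -> option C) (m : mon) : mon :=
  [ffun p => if indom ev p then 0%nat else m p].

Definition monval_dom (ev : P -> option C) (m : mon) : C :=
  \prod_(p : P | indom ev p) (odflt 0 (ev p)) ^+ (m p).

Definition mubeta (ev : P -> option C) (E : seq (C * mon)) (m : mon) : C :=
  \sum_(m' <- links E | restrict ev m' == m) coef E m' * monval_dom ev m'.

(* the triple (v,t,s) is a vertex of Sigma_beta, where ev = ev_beta *)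
Definition beta_relevant (ev : P -> option C) (v : Q1) (t s : 'I_n) : bool :=
  rel3 v t s &&
  has (fun m => mubeta ev (Ecomp v t s) m != 0)
      (map (restrict ev) (links (Ecomp v t s))).

Definition Ered (v : Q1) (t s : 'I_n) : seq (C * mon) :=
  [seq (muG v s t', mvar (t, t')) | t' <- enum 'I_n & (val t < val t')%nat]
  ++ [seq (muG v x.1 x.2, mon2 (t, x.2) (x.1, s))
       | x <- enum {: P} & ((val t < val x.2)%nat && (val x.1 < val s)%nat)]
  ++ [seq (- muG v s' t, mvar (s', s)) | s' <- enum 'I_n & (val s' < val s)%nat]
  ++ [:: (- muG v s t, mon0)].

Definition red_triple (v : Q1) (t s : 'I_n) : bool :=
  rel3 v t s && ~~ extremal_arrow v s t.

Definition red_pair (i j : 'I_n) : bool := rel2 i j && (val i < val j)%nat.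

Definition red_edge (v : Q1) (t s i j : 'I_n) : bool :=
  [&& red_triple v t s, red_pair i j & occurs (Ered v t s) (i, j)].

Definition simply_linked (v : Q1) (t s i j : 'I_n) : bool :=
  [&& red_edge v t s i j,
      mvar (i, j) \in links (Ered v t s) &
      all (fun m : mon => (m == mvar (i, j)) || (m (i, j) == 0%nat))
          (links (Ered v t s))].

Definition extremal_edge (v : Q1) (t s i j : 'I_n) : bool :=
  simply_linked v t s i j &&
  (((j == s) && extremal_arrow v i t) || ((i == t) && extremal_arrow v s j)).

End Schubert.

From Pilot Require Import Defs.
From mathcomp Require Import all_boot all_order all_algebra.
From mathcomp Require Import complex Rstruct.
From Stdlib Require Import Reals.
Set Implicit Arguments. Unset Strict Implicit. Unset Printing Implicit Defensive.
Import Order.TTheory GRing.Theory Num.Theory.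
Local Open Scope ring_scope.

(* An extremal arrow (v,a,b) of Gamma is determined by either of its endpoints,
   which bounds the number of extremal edges at a triple by two.  Extremality
   also kills every term of E(v,b,a) except mu_{v,a,b} (w_{b,b} w_{a,a} - w_{a,a}),
   so a partial evaluation extending f_beta with a in beta forces b in beta.
   A triple (v,t,s) is beta-relevant only if t is not in beta (otherwise
   w_{t,t} = 1 makes the terms of E(v,t,s) cancel in pairs) and s is in beta
   (otherwise every monomial contains some w_{s',s} evaluated to 0); for an
   extremal edge this is propagated along the extremal arrow. *)

Section FormalSums.
Variables (n : nat) (C : fieldType).
Local Notation P := ('I_n * 'I_n)%type.
Local Notation mon := (mon n).
Implicit Types (E : seq (C * mon)) (ev : P -> option C).

Lemma sum_links_coef E (g : mon -> C) :
  \sum_(m <- links E) coef E m * g m = \sum_(x <- E) x.1 * g x.2.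
Proof.
rewrite /links big_filter big_mkcond.
transitivity (\sum_(m <- undup (map snd E)) \sum_(x <- E | x.2 == m) x.1 * g x.2).
  apply: eq_bigr => m _; rewrite /coef mulr_suml.
  under [in RHS]eq_bigr => x /eqP-> do [].
  by case: ifPn => // /negPn/eqP; rewrite -mulr_suml => ->; rewrite mul0r.
rewrite (exchange_big_dep predT) //= big_seq [RHS]big_seq; apply: eq_bigr => x xE.
rewrite (eq_bigl (pred1 x.2)) => [|m]; last exact: eq_sym.
by rewrite -big_filter filter_pred1_uniq ?undup_uniq ?mem_undup ?map_f ?big_seq1.
Qed.

Lemma evalE_sum ev E : evalE ev E = \sum_(x <- E) x.1 * monval ev x.2.
Proof. exact: sum_links_coef. Qed.

Lemma mubeta_sum ev E m :
  mubeta ev E m =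
  \sum_(x <- E) x.1 * (if Defs.restrict ev x.2 == m then monval_dom ev x.2 else 0).
Proof.
rewrite /mubeta big_mkcond -(sum_links_coef _
  (fun m' => if Defs.restrict ev m' == m then monval_dom ev m' else 0)).
by apply: eq_bigr => m' _; case: ifP; rewrite ?mulr0.
Qed.

Lemma occurs_term E p :
  occurs E p -> exists2 x, x \in E & (x.1 != 0) && (0 < x.2 p)%nat.
Proof.
case/hasP => m; rewrite mem_filter => /andP[coef_m _] m_p.
have [/hasP[x xE /andP[x1 /eqP x2]]|] :=
  boolP (has (fun x : C * mon => (x.1 != 0) && (x.2 == m)) E).
  by exists x; rewrite // x1 x2.
move/hasPn=> Ezero; move: coef_m; rewrite /coef big_seq_cond big1 ?eqxx //.
by move=> x /andP[xE x2]; move: (Ezero x xE); rewrite x2 andbT negbK => /eqP.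
Qed.

Lemma prod_expr_indicator (x : P -> C) (A : pred P) p :
  A p -> \prod_(r | A r) x r ^+ (r == p) = x p.
Proof.
move=> Ap; rewrite (bigD1 p) //= eqxx expr1 big1 ?mulr1 // => r /andP[_ /negbTE->].
exact: expr0.
Qed.

Lemma monval_mvar ev p : monval ev (mvar p) = odflt 0 (ev p).
Proof.
rewrite -(@prod_expr_indicator (fun r => odflt 0 (ev r)) predT) //.
by apply: eq_bigr => r _; rewrite ffunE.
Qed.

Lemma monval_mon2 ev p q :
  monval ev (mon2 p q) = odflt 0 (ev p) * odflt 0 (ev q).
Proof.
rewrite -(@prod_expr_indicator (fun r => odflt 0 (ev r)) predT p) //.
rewrite -(@prod_expr_indicator (fun r => odflt 0 (ev r)) predT q) // -big_split.
by apply: eq_bigr => r _; rewrite ffunE exprD.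
Qed.

Lemma monval_dom_mon2 ev p q : indom ev p ->
  monval_dom ev (mon2 p q) = odflt 0 (ev p) * monval_dom ev (mvar q).
Proof.
move=> dom_p.
rewrite -(@prod_expr_indicator (fun r => odflt 0 (ev r)) (indom ev) p) //.
by rewrite -big_split /=; apply: eq_bigr => r _; rewrite !ffunE exprD.
Qed.

Lemma monval_dom_eq0 ev (m : mon) p :
  (0 < m p)%nat -> ev p = Some 0 -> monval_dom ev m = 0.
Proof.
move=> m_p ev_p; rewrite /monval_dom (bigD1 p) /=; last by rewrite /indom ev_p.
by rewrite ev_p /= expr0n; case: (m p) m_p => // k _; rewrite mul0r.
Qed.

Lemma restrict_mon2 ev p q :
  indom ev p -> Defs.restrict ev (mon2 p q) = Defs.restrict ev (mvar q).
Proof.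
move=> dom_p; apply/ffunP => r; rewrite !ffunE.
by case: ifP => // dom_r; case: eqP => // r_p; rewrite r_p dom_p in dom_r.
Qed.

End FormalSums.

Section ExtremalEdges.
Variables (Q0 Q1 : finType) (src tgt : Q1 -> Q0) (n : nat) (F : 'I_n -> Q0).
Variables (C : fieldType) (mu : Q1 -> 'I_n -> 'I_n -> C).
Local Notation P := ('I_n * 'I_n)%type.
Local Notation mon := (mon n).
Local Notation arrow := (arrow src tgt F mu).
Local Notation muG := (muG src tgt F mu).
Local Notation extremal_arrow := (extremal_arrow src tgt F mu).
Local Notation rel2 := (rel2 F).
Local Notation rel3 := (rel3 src tgt F mu).
Local Notation Ecomp := (Ecomp src tgt F mu).
Local Notation is_peval := (is_peval src tgt F mu).
Local Notation beta_relevant := (beta_relevant src tgt F mu).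
Local Notation extremal_edge := (extremal_edge src tgt F mu).
Implicit Types (ev : P -> option C) (beta : {set 'I_n}).

Lemma rel2_refl a : rel2 a a.
Proof. by rewrite /Defs.rel2 eqxx leqnn. Qed.

Lemma muG_arrow v a b : muG v a b != 0 -> arrow v a b.
Proof. by rewrite /Defs.muG; case: ifP; rewrite ?eqxx. Qed.

Lemma admissible_mvar c p : admissible F (C:=C) (c, mvar p) = rel2 p.1 p.2.
Proof.
apply/forallP/idP => [/(_ p)|rel_p r]; first by rewrite /= ffunE eqxx.
by rewrite /= ffunE; case: eqP => [->|].
Qed.

Lemma admissible_mon2 c p q :
  admissible F (C:=C) (c, mon2 p q) = rel2 p.1 p.2 && rel2 q.1 q.2.
Proof.
apply/forallP/andP => [adm|[rel_p rel_q] r].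
  by split; [move: (adm p) | move: (adm q)]; rewrite /= ffunE eqxx ?addn1 ?add1n.
by rewrite /= ffunE; case: eqP => [->|_] //; case: eqP => [->|_].
Qed.

Lemma sum_Ecomp v t s (f : C * mon -> C) :
  \sum_(x <- Ecomp v t s) f x =
    \sum_s' \sum_t' (if rel2 t t' && rel2 s' s then
                       f (muG v s' t', mon2 (t, t') (s', s)) else 0)
  + \sum_s' (if rel2 s' s then f (- muG v s' t, mvar (s', s)) else 0).
Proof.
rewrite /Ecomp big_filter big_mkcond big_cat big_allpairs_dep !big_map.
rewrite !enumT ![index_enum _]unlock; congr (_ + _).
  by do 2![apply: eq_bigr => ? _]; rewrite admissible_mon2.
by apply: eq_bigr => ? _; rewrite admissible_mvar.
Qed.

Lemma Ecomp_term v t s x : x \in Ecomp v t s -> x.1 != 0 ->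
  (exists s' t', [/\ arrow v s' t', rel2 t t', rel2 s' s &
                     x = (muG v s' t', mon2 (t, t') (s', s))]) \/
  (exists s', [/\ arrow v s' t, rel2 s' s & x = (- muG v s' t, mvar (s', s))]).
Proof.
rewrite mem_filter mem_cat.
case/andP=> + /orP[/allpairsP[[s' t'] [_ _ /= x_eq]] | /mapP[s' _ x_eq]]; subst x.
  rewrite admissible_mon2 => /andP[rel_t rel_s] mu_neq0.
  by left; exists s', t'; split => //; apply: muG_arrow.
rewrite admissible_mvar oppr_eq0 => rel_s mu_neq0.
by right; exists s'; split => //; apply: muG_arrow.
Qed.

Lemma extremal_arrow_eq v a b s' t' : extremal_arrow v a b -> arrow v s' t' ->
  (s' <= a)%nat -> (b <= t')%nat -> s' = a /\ t' = b.
Proof.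
case/andP=> _ /forallP/(_ s')/forallP/(_ t') extremal arr s'_le t'_ge.
move: extremal; rewrite arr /=; case: eqP => [[-> ->] //|_] /=.
by rewrite ltnNge s'_le ltnNge t'_ge.
Qed.

Lemma extremal_arrow_src_inj v a a' b :
  extremal_arrow v a b -> extremal_arrow v a' b -> a = a'.
Proof.
move=> ext ext'; case: (leqP a' a) => [le_a'a | /ltnW le_aa'].
  by case: (extremal_arrow_eq ext (proj1 (andP ext')) le_a'a (leqnn b)).
by case: (extremal_arrow_eq ext' (proj1 (andP ext)) le_aa' (leqnn b)).
Qed.

Lemma extremal_arrow_tgt_inj v a b b' :
  extremal_arrow v a b -> extremal_arrow v a b' -> b = b'.
Proof.
move=> ext ext'; case: (leqP b b') => [le_bb' | /ltnW le_b'b].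
  by case: (extremal_arrow_eq ext (proj1 (andP ext')) (leqnn a) le_bb').
by case: (extremal_arrow_eq ext' (proj1 (andP ext)) (leqnn a) le_b'b).
Qed.

Lemma card_extremal_edges v t s :
  (#|[set p : P | extremal_edge v t s p.1 p.2]| <= 2)%nat.
Proof.
pose in_edges := [set p : P | (p.2 == s) && extremal_arrow v p.1 t].
pose out_edges := [set p : P | (p.1 == t) && extremal_arrow v s p.2].
have card_in : (#|in_edges| <= 1)%nat.
  apply/card_le1_eqP => -[a b] -[a' b']; rewrite !inE /=.
  by case/andP=> /eqP-> ext /andP[/eqP-> /(extremal_arrow_src_inj ext)->].
have card_out : (#|out_edges| <= 1)%nat.
  apply/card_le1_eqP => -[a b] -[a' b']; rewrite !inE /=.
  by case/andP=> /eqP-> ext /andP[/eqP-> /(extremal_arrow_tgt_inj ext)->].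
apply: leq_trans (_ : #|in_edges :|: out_edges| <= 2)%nat.
  apply/subset_leq_card/subsetP => -[a b]; rewrite !inE /=.
  by case/andP=> _ /orP[] /andP[-> ->]; rewrite ?orbT.
by apply: leq_trans (leq_card_setU _ _) _; apply: (leq_add card_in card_out).
Qed.

Lemma sum_Ecomp_extremal v a b (g : mon -> C) : extremal_arrow v a b ->
  \sum_(x <- Ecomp v b a) x.1 * g x.2 =
  muG v a b * (g (mon2 (b, b) (a, a)) - g (mvar (a, a))).
Proof.
move=> ext; rewrite sum_Ecomp pair_bigA (bigD1 (a, b)) //= (bigD1 a) //=.
rewrite !rel2_refl /= big1 => [|[s' t'] /= st'_neq]; last first.
  case: ifP => // /andP[/andP[_ le_bt'] /andP[_ le_s'a]].
  have [-> | /muG_arrow arr] := eqVneq (muG v s' t') 0; first by rewrite mul0r.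
  by case: (extremal_arrow_eq ext arr le_s'a le_bt') st'_neq => -> ->; rewrite eqxx.
rewrite big1 => [|s' s'_neq]; first by rewrite !addr0 mulNr mulrBr.
case: ifP => // /andP[_ le_s'a].
have [-> | /muG_arrow arr] := eqVneq (muG v s' b) 0; first by rewrite oppr0 mul0r.
by case: (extremal_arrow_eq ext arr le_s'a (leqnn b)) s'_neq => ->; rewrite eqxx.
Qed.

Lemma occurs_Ecomp_extremal v a b p : extremal_arrow v a b ->
  occurs (Ecomp v b a) p -> p = (a, a) \/ p = (b, b).
Proof.
move=> ext /occurs_term[x xE /andP[x1_neq0 x_p]].
have [[s' [t' [arr /andP[_ le_bt'] /andP[_ le_s'a] x_eq]]] | [s' [arr /andP[_ le_s'a] x_eq]]]
  := Ecomp_term xE x1_neq0; subst x; move: x_p.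
  case: (extremal_arrow_eq ext arr le_s'a le_bt') => -> ->.
  by rewrite /= ffunE; do 2![case: eqP => [->|_]]; auto.
case: (extremal_arrow_eq ext arr le_s'a (leqnn b)) => -> _.
by rewrite /= ffunE; case: eqP => [->|]; auto.
Qed.

Lemma peval_evalE_eq0 ev v t s : is_peval ev -> rel3 v t s ->
  (forall p, occurs (Ecomp v t s) p -> indom ev p) ->
  evalE ev (Ecomp v t s) = 0.
Proof.
move=> [_ peval_eq] rel_vts dom_occ.
have [k occ_k | no_occ] := pickP (occurs (Ecomp v t s)).
  by case: (peval_eq v t s rel_vts k occ_k (fun p occ_p _ => dom_occ p occ_p)).
rewrite /evalE big_seq big1 // => m m_link; exfalso.
have := m_link; rewrite mem_filter mem_undup => /andP[_ /mapP[x xE m_eq]].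
have [s' x_s's] : exists s', (0 < x.2 (s', s))%nat.
  move: xE; rewrite mem_filter mem_cat => /andP[_ /orP[]].
    by case/allpairsP => -[s' t'] [_ _ ->]; exists s'; rewrite ffunE eqxx addn1.
  by case/mapP => s' _ ->; exists s'; rewrite ffunE eqxx.
by move: (no_occ (s', s)) => /hasP; apply; exists m; rewrite // m_eq.
Qed.

Lemma fbeta_diag ev beta a : extends ev (fbeta F C beta) ->
  ev (a, a) = Some (if a \in beta then 1 else 0).
Proof.
by move=> ext; apply: ext; rewrite /fbeta /= rel2_refl eqxx /=; case: (a \in beta).
Qed.

Lemma indom_diag ev beta a : extends ev (fbeta F C beta) -> indom ev (a, a).
Proof. by move=> ext; rewrite /indom (fbeta_diag a ext). Qed.

Lemma fbeta_col ev beta a b : extends ev (fbeta F C beta) ->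
  rel2 a b -> b \notin beta -> ev (a, b) = Some 0.
Proof.
move=> ext rel_ab b_notin; apply: ext; rewrite /fbeta /= rel_ab.
by case: eqP => [->|_] /=; rewrite ?(negbTE b_notin) ?b_notin ?orbT.
Qed.

Lemma fbeta_row ev beta a b : extends ev (fbeta F C beta) ->
  rel2 a b -> a \in beta -> a != b -> ev (a, b) = Some 0.
Proof.
by move=> ext rel_ab a_in ab_neq; apply: ext; rewrite /fbeta /= rel_ab (negbTE ab_neq) a_in.
Qed.

Lemma extremal_arrow_mem_beta ev beta v a b :
  is_peval ev -> extends ev (fbeta F C beta) ->
  extremal_arrow v a b -> a \in beta -> b \in beta.
Proof.
move=> peval ext ext_ab a_in.
have arr : arrow v a b by case/andP: ext_ab.
have rel_vba : rel3 v b a.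
  case/and3P: (arr) => Fa Fb _; rewrite /Defs.rel3 Fa Fb /=.
  by apply/existsP; exists a; apply/existsP; exists b; rewrite arr !leqnn.
have dom_occ p : occurs (Ecomp v b a) p -> indom ev p.
  by case/(occurs_Ecomp_extremal ext_ab) => ->; apply: indom_diag ext.
have := peval_evalE_eq0 peval rel_vba dom_occ.
rewrite evalE_sum (sum_Ecomp_extremal _ ext_ab) monval_mon2 monval_mvar.
rewrite !(fbeta_diag _ ext) a_in /= mulr1 /Defs.muG arr.
case: (b \in beta) => //; rewrite sub0r mulrN1 => /eqP; rewrite oppr_eq0.
by case/and3P: arr => _ _ /negbTE->.
Qed.

Lemma not_beta_relevant ev v t s :
  (forall m, mubeta ev (Ecomp v t s) m = 0) -> ~~ beta_relevant ev v t s.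
Proof.
move=> mubeta0; rewrite /beta_relevant negb_and; apply/orP; right.
by apply/hasPn => m _; rewrite mubeta0 eqxx.
Qed.

Lemma beta_relevant_src ev beta v t s :
  extends ev (fbeta F C beta) -> beta_relevant ev v t s -> s \in beta.
Proof.
move=> ext; apply: contraLR => s_notin; apply: not_beta_relevant => m.
rewrite mubeta_sum big1_seq // => x /andP[_ xE].
have [-> | x1_neq0] := eqVneq x.1 0; first by rewrite mul0r.
have col0 s' : rel2 s' s -> ev (s', s) = Some 0 by move/(fbeta_col ext); apply.
have [[s' [t' [_ _ rel_s ->]]] | [s' [_ rel_s ->]]] := Ecomp_term xE x1_neq0;
  by rewrite /= (@monval_dom_eq0 _ _ ev _ (s', s)) ?col0 ?if_same ?mulr0 // ffunE eqxx ?addn1.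
Qed.

Lemma beta_relevant_tgt ev beta v t s :
  extends ev (fbeta F C beta) -> beta_relevant ev v t s -> t \notin beta.
Proof.
move=> ext; apply: contraL => t_in; apply: not_beta_relevant => m.
rewrite mubeta_sum sum_Ecomp -big_split big1 // => s' _ /=.
rewrite (bigD1 t) //= [X in _ + X + _]big1 => [|t' t'_neq]; last first.
  case: ifP => // /andP[rel_tt' _].
  rewrite (@monval_dom_eq0 _ _ ev _ (t, t')) ?if_same ?mulr0 ?ffunE ?eqxx //.
  by apply: fbeta_row ext rel_tt' t_in _; rewrite eq_sym.
rewrite addr0 rel2_refl /=; case: ifP => // rel_s; last by rewrite addr0.
rewrite restrict_mon2 ?(indom_diag _ ext) // monval_dom_mon2 ?(indom_diag _ ext) //.
rewrite (fbeta_diag _ ext) t_in /= mul1r.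
by case: ifP => _; rewrite ?mulr0 ?addr0 // mulNr addrN.
Qed.

End ExtremalEdges.
Unset Implicit Arguments. Set Strict Implicit.

Theorem lemma2p25 (Q0 Q1 : finType) (src tgt : Q1 -> Q0) (n : nat)
    (F : 'I_n -> Q0) (mu : Q1 -> 'I_n -> 'I_n -> CC) :
  (forall (v : Q1) (t s : 'I_n),
     red_triple src tgt F mu v t s ->
     (#|[set p : 'I_n * 'I_n | extremal_edge src tgt F mu v t s p.1 p.2]|
        <= 2)%nat) /\
  (forall (beta : {set 'I_n}) (ev : 'I_n * 'I_n -> option CC),
     is_peval src tgt F mu ev ->
     extends ev (fbeta F CC beta) ->
     (forall ev' : 'I_n * 'I_n -> option CC,
        is_peval src tgt F mu ev' -> extends ev' (fbeta F CC beta) ->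
        extends ev' ev) ->
     forall (v : Q1) (t s i j : 'I_n),
       extremal_edge src tgt F mu v t s i j ->
       beta_relevant src tgt F mu ev v t s ->
       i \notin beta /\ j \in beta).
Proof.
split=> [v t s _ | beta ev peval ext _ v t s i j /andP[_ ext_edge] relevant].
  exact: card_extremal_edges.
have t_notin := beta_relevant_tgt ext relevant.
have s_in := beta_relevant_src ext relevant.
case/orP: ext_edge => /andP[/eqP-> ext_arrow]; split=> //.
  by apply: contra t_notin; apply: extremal_arrow_mem_beta peval ext ext_arrow.
exact: extremal_arrow_mem_beta peval ext ext_arrow s_in.
Qed.
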